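(* Let $V$ and $W$ be pfd $B$-persistence modules and $\epsilon\ge0$. (1) $\mathscr{B}_{2\epsilon}(V^{\mathcal{L}})=\mathscr{B}(V^{\mathcal{L}})$ and $\mathscr{B}_{2\epsilon}(W^{\mathcal{L}})=\mathscr{B}(W^{\mathcal{L}})$. (2) Let $G$ be the bipartite graph with vertex multisets $\mathscr{B}(V^{\mathcal{L}})$ and $\mathscr{B}(W^{\mathcal{L}})$, with an edge between $M$ and $N$ iff $M$ and $N$ are $\Lambda_\epsilon$-interleaved. Suppose $V^{\mathcal{L}}$ and $W^{\mathcal{L}}$ are $\Lambda_\epsilon$-interleaved. Then: - the full subgraph $G(\mathscr{B}_{2\epsilon}(V^{\mathcal{L}}),\mathscr{B}(W^{\mathcal{L}}))$ satisfies Hall's condition (H): every finite $X\subseteq\mathscr{B}_{2\epsilon}(V^{\mathcal{L}})$ has $|X|\le|N(X)|$; - the full subgraph $G(\mathscr{B}(V^{\mathcal{L}}),\mathscr{B}_{2\epsilon}(W^{\mathcal{L}}))$ satisfies (H'): every finite $Y\subseteq\mathscr{B}_{2\epsilon}(W^{\mathcal{L}})$ has $|Y|\le|N(Y)|$. Here $N(\cdot)$ denotes the set of neighbours in $G$. Consequently, if $V^{\mathcal{L}}$ and $W^{\mathcal{L}}$ are $\Lambda_\epsilon$-interleaved, then there exists a bottleneck $\Lambda_\epsilon$-interleaving between them.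
   Context: Let $k$ be a field. The bipath poset $B$ has underlying set $(\mathbb{R}\times\{1,2\})\sqcup\{-\infty,+\infty\}$. Its order is: $x\le y$ iff $x=-\infty$, or $y=+\infty$, or $x=(s,i)$, $y=(t,i)$ with the same $i$ and $s\le t$. $B$-persistence modules are functors from $B$ (as a category) to $k$-vector spaces; pfd means all spaces are finite-dimensional. An interval of $B$ is a nonempty convex and connected subset. Every pfd $B$-module decomposes uniquely (up to isomorphism and permutation) into interval modules $k_I$; $\mathscr{B}(V)$ is the multiset of these summands (elements counted with multiplicity, each a separate vertex). $\mathcal{L}$ is the set of intervals $\neq B$ containing $-\infty$. $V^{\mathcal{L}}$ is the direct sum of the interval summands of $V$ whose interval lies in $\mathcal{L}$. For $\epsilon\ge0$, $\Lambda_\epsilon$ sends $(r,i)\mapsto(r+\epsilon,i)$ and fixes $\pm\infty$. Then: - $V(\epsilon)_b=V_{\Lambda_\epsilon b}$ and $V(\epsilon)(b,b')=V(\Lambda_\epsilon b,\Lambda_\epsilon b')$; $\phi(\epsilon)$ has components $\phi_{\Lambda_\epsilon b}$; - $V_{0\to\epsilon}$ has components $V(b,\Lambda_\epsilon b)$; - $V$ is $\Lambda_\epsilon$-trivial if $V_{0\to\epsilon}=0$, and $\Lambda_\epsilon$-significant otherwise; - $\mathscr{B}_{2\epsilon}(V)$ is the submultiset of $\Lambda_{2\epsilon}$-significant summands in $\mathscr{B}(V)$; - a $\Lambda_\epsilon$-interleaving is a pair $\alpha\colon V\to W(\epsilon)$, $\beta\colon W\to V(\epsilon)$ with $\beta(\epsilon)\alpha=V_{0\to2\epsilon}$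 and $\alpha(\epsilon)\beta=W_{0\to2\epsilon}$; - a bottleneck $\Lambda_\epsilon$-interleaving is a bijection $\sigma$ between submultisets of $\mathscr{B}(V)$ and $\mathscr{B}(W)$ such that all unmatched summands are $\Lambda_{2\epsilon}$-trivial and each matched pair is $\Lambda_\epsilon$-interleaved. A full subgraph $G(X',Y')$ has vertex sets $X'$, $Y'$ and all edges of $G$ between them. *)

From Stdlib Require Import Reals.
From mathcomp Require Import all_boot all_order all_algebra.
Set Implicit Arguments. Unset Strict Implicit. Unset Printing Implicit Defensive.
Import GRing.Theory.
Local Open Scope ring_scope.

(* The bipath poset B = (R x {1,2}) ⊔ {-oo, +oo}.                       *)
Inductive lane := One | Two.

Definition lane_eqb (i j : lane) : bool :=
  match i, j with One, One | Two, Two => true | _, _ => false end.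

Inductive bpt :=
| NegInf : bpt
| Pt : R -> lane -> bpt
| PosInf : bpt.

Definition Rleb (s t : R) : bool := if Rle_dec s t then true else false.

Definition ble (x y : bpt) : bool :=
  match x, y with
  | NegInf, _ => true
  | _, PosInf => true
  | Pt s i, Pt t j => lane_eqb i j && Rleb s t
  | _, _ => false
  end.

Definition bcomparable (x y : bpt) : bool := ble x y || ble y x.

Definition lam (eps : R) (b : bpt) : bpt :=
  match b with Pt r i => Pt (Rplus r eps) i | _ => b end.

Definition interval (I : pred bpt) : Prop :=
  [/\ exists b, I b,
      (forall x y z, I x -> I z -> ble x y -> ble y z -> I y) &
      (forall x y, I x -> I y ->
         exists s : seq bpt, [/\ all I s, path bcomparable x s & last x s = y])].

Definition inL (I : pred bpt) : Prop :=
  [/\ interval I, I NegInf & exists b, ~~ I b].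

(* pfd B-persistence modules, presented concretely: a finite dimension *)
(* at each point and a structure matrix (row-vector convention, i.e.   *)
(* v |-> v *m bmap b b') for each pair b <= b'.  Every pfd module is   *)
(* isomorphic to such a presentation.                                  *)
Section Modules.
Variable k : fieldType.

Record bmod := BMod {
  bdim : bpt -> nat;
  bmap : forall b b' : bpt, 'M[k]_(bdim b, bdim b')
}.

Definition is_bmod (V : bmod) : Prop :=
  (forall b, bmap V b b = 1%:M) /\
  (forall b b' b'', ble b b' -> ble b' b'' ->
     bmap V b b' *m bmap V b' b'' = bmap V b b'').

Definition is_morph (V W : bmod) (f : forall b, 'M[k]_(bdim V b, bdim W b)) : Prop :=
  forall b b', ble b b' -> bmap V b b' *m f b' = f b *m bmap W b b'.

Definition shift (eps : R) (V : bmod) : bmod :=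
  @BMod (fun b => bdim V (lam eps b)) (fun b b' => bmap V (lam eps b) (lam eps b')).

Definition triv (delta : R) (V : bmod) : Prop :=
  forall b, bmap V b (lam delta b) = 0.

Definition significant (delta : R) (V : bmod) : Prop := ~ triv delta V.

(* Here V_{0->2eps} has components V(b, Lambda_{2eps} b) = V(b, Lambda_eps (Lambda_eps b)). *)
Definition interleaved (eps : R) (V W : bmod) : Prop :=
  exists (alpha : forall b, 'M[k]_(bdim V b, bdim W (lam eps b)))
         (beta : forall b, 'M[k]_(bdim W b, bdim V (lam eps b))),
    [/\ is_morph (V := V) (W := shift eps W) alpha,
        is_morph (V := W) (W := shift eps V) beta,
        (forall b, alpha b *m beta (lam eps b) = bmap V b (lam eps (lam eps b))) &
        (forall b, beta b *m alpha (lam eps b) = bmap W b (lam eps (lam eps b)))].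

Definition ivmod (I : pred bpt) : bmod :=
  @BMod (fun b => nat_of_bool (I b)) (fun b b' => const_mx 1).

(* finite direct sum of interval modules (+)_{p < m} k_{X p}; the basis at b
   is indexed by the p with b \in X p, in increasing order *)
Definition dsum_idx (m : nat) (X : 'I_m -> pred bpt) (b : bpt) : seq nat :=
  [seq val p | p <- enum 'I_m & X p b].

Definition dsum (m : nat) (X : 'I_m -> pred bpt) : bmod :=
  @BMod (fun b => size (dsum_idx X b))
        (fun b b' => \matrix_(a, c)
           ((nth 0%N (dsum_idx X b) a == nth 0%N (dsum_idx X b') c) : nat)%:R).

(* (I, J) is the barcode of V, i.e. V is isomorphic to (+)_{i : I} k_{J i}:
   the isomorphism is given by the images e i b of the generators of the
   summands, which form a basis of V_b at each b, and are carried along by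
   the structure maps exactly as in k_{J i}. *)
Definition is_barcode (V : bmod) (I : Type) (J : I -> pred bpt) : Prop :=
  (forall i, interval (J i)) /\
  exists e : I -> forall b, 'rV[k]_(bdim V b),
    (forall b, exists s : seq I,
        (forall i, J i b <-> List.In i s) /\
        basis_of fullv [seq e i b | i <- s]) /\
    (forall i b b', ble b b' -> J i b ->
        e i b *m bmap V b b' = if J i b' then e i b' else 0).

(* f enumerates (without repetition) the summands of the barcode whose
   interval lies in L; these are the summands of V^L. *)
Definition enumL (I : Type) (J : I -> pred bpt) (m : nat) (f : 'I_m -> I) : Prop :=
  [/\ injective f, (forall p, inL (J (f p))) &
      (forall i, inL (J i) -> exists p, f p = i)].

Definition hall (m n : nat) (P : 'I_m -> Prop) (E : 'I_m -> 'I_n -> Prop) : Prop :=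
  forall X : {set 'I_m}, (forall p, p \in X -> P p) ->
    exists NX : {set 'I_n},
      (forall q, q \in NX <-> exists2 p, p \in X & E p q) /\ (#|X| <= #|NX|)%N.

(* bottleneck Lambda_eps-interleaving between (+)_p k_{X p} and (+)_q k_{Y q}:
   a partial injection sigma (a bijection between sub-multisets) matching
   only Lambda_eps-interleaved pairs, all unmatched summands Lambda_{2eps}-trivial. *)
Definition bottleneck (eps : R) (m n : nat) (X : 'I_m -> pred bpt) (Y : 'I_n -> pred bpt) : Prop :=
  exists sigma : 'I_m -> option 'I_n,
    [/\ (forall p p' q, sigma p = Some q -> sigma p' = Some q -> p = p'),
        (forall p q, sigma p = Some q -> interleaved eps (ivmod (X p)) (ivmod (Y q))),
        (forall p, sigma p = None -> triv (Rplus eps eps) (ivmod (X p))) &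
        (forall q, (forall p, sigma p <> Some q) -> triv (Rplus eps eps) (ivmod (Y q)))].

End Modules.

From Stdlib Require Import Reals Lra.
From mathcomp Require Import all_boot all_order all_algebra.
From mathcomp Require Import boolp.
Set Implicit Arguments. Unset Strict Implicit. Unset Printing Implicit Defensive.
Import GRing.Theory.

(* At -oo every summand of V^L and W^L is present, so an interleaving of V^L
   and W^L restricts there to matrices A : k^m -> k^n and B : k^n -> k^m with
   AB = 1.  By naturality, A p q <> 0 only if the q-th interval of W^L shifted
   down by eps lies in the p-th interval of V^L, and dually for B; a pair related
   both ways is interleaved.  An interval of L is a downset, i.e. a cut of R on
   each lane, and ranking cuts lexicographically by (type, supremum,
   closedness), summed over the two lanes, gives a potential that strictly
   decreases along p' -B- q -A- p when neither (p, q) nor (p', q) is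
   interleaved.  Hence, for a set X with neighbourhood N, the X x X block of
   AB = 1 is (A_XN)(B_NX) plus a block M that is strictly triangular for the
   potential; 1 - M is invertible, so |X| <= rank A_XN <= |N|.  Hall's marriage
   theorem then gives a matching, which is perfect since the conditions on both
   sides force m = n. *)

Section HallMarriage.
Variables (T U : finType) (E : T -> U -> bool).
Implicit Types (A X Y : {set T}) (B : {set U}) (f : T -> option U).

Definition nbh (X : {set T}) (B : {set U}) := [set y in B | [exists x in X, E x y]].

Definition hall_cond (A : {set T}) (B : {set U}) :=
  forall X, X \subset A -> #|X| <= #|nbh X B|.

Definition matching (A : {set T}) (B : {set U}) (f : T -> option U) :=
  {in A, forall x, exists2 y, f x = Some y & (y \in B) && E x y} /\ {in A &, injective f}.

Lemma matching_glue X Y (B1 B2 : {set U}) f1 f2 :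
  matching X B1 f1 -> matching Y B2 f2 -> [disjoint B1 & B2] ->
  matching (X :|: Y) (B1 :|: B2) (fun x => if x \in X then f1 x else f2 x).
Proof.
move=> [f1E f1I] [f2E f2I] B12; split.
  move=> x; rewrite inE; case: ifP => [xX _ | _ /= xY].
    by have [y -> /andP[yB Exy]] := f1E x xX; exists y; rewrite // inE yB.
  by have [y -> /andP[yB Exy]] := f2E x xY; exists y; rewrite // inE yB orbT.
have cross x x' : x \in X -> x' \in Y -> f1 x <> f2 x'.
  move=> xX x'Y; have [y -> /andP[yB _]] := f1E x xX.
  have [y' -> /andP[y'B _]] := f2E x' x'Y; case=> eyy'.
  by move/pred0P/(_ y): B12; rewrite /= yB eyy' y'B.
move=> x x'; rewrite !inE.
case: ifP => xX; case: ifP => x'X /= hx hx'.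
- exact: f1I.
- by move/(cross _ _ xX hx').
- by move/esym/(cross _ _ x'X hx).
- exact: f2I.
Qed.

Lemma hall_cond_tight A B X :
  hall_cond A B -> X \subset A -> #|nbh X B| <= #|X| ->
  hall_cond (A :\: X) (B :\: nbh X B).
Proof.
move=> hAB XA tight Y; rewrite subsetD => /andP[YA YX].
have cardYX : #|Y :|: X| = #|Y| + #|X|.
  by rewrite cardsU (disjoint_setI0 YX) cards0 subn0.
have nbhYX : nbh (Y :|: X) B \subset nbh Y (B :\: nbh X B) :|: nbh X B.
  apply/subsetP => y; rewrite !inE => /andP[yB /existsP[x /andP[xYX Exy]]].
  case: (boolP [exists x in X, E x y]) => [_|nX]; first by rewrite yB orbT.
  rewrite yB /= orbF; apply/existsP; exists x; rewrite Exy andbT.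
  move: xYX; rewrite inE => /orP[//|xX].
  by case/negP: nX; apply/existsP; exists x; rewrite xX.
rewrite -(leq_add2r #|X|) -cardYX.
apply: leq_trans (hAB _ _) _; first by rewrite subUset YA.
apply: leq_trans (subset_leq_card nbhYX) _; apply: leq_trans (leq_card_setU _ _) _.
by rewrite leq_add2l.
Qed.

Lemma hall_cond_surplus A B a b :
  (forall X, X \subset A -> X != set0 -> X != A -> #|X| < #|nbh X B|) ->
  a \in A -> hall_cond (A :\ a) (B :\ b).
Proof.
move=> surplus aA Y; rewrite subsetD1 => /andP[YA aY].
have [->|Y0] := eqVneq Y set0; first by rewrite cards0.
have YA' : Y != A by apply: contraNneq aY => ->.
rewrite -ltnS; apply: leq_trans (surplus Y YA Y0 YA') _.
rewrite (cardsD1 b) -add1n leq_add ?leq_b1 // subset_leq_card //.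
by apply/subsetP => y; rewrite !inE => /andP[-> /andP[-> ->]].
Qed.

Lemma nbh_sub X B : nbh X B \subset B.
Proof. by apply/subsetP => y; rewrite inE => /andP[]. Qed.

Lemma nbhN X B x y : x \in X -> y \in B -> y \notin nbh X B -> ~~ E x y.
Proof.
by move=> xX yB; rewrite inE yB; apply: contra => Exy; apply/existsP; exists x; rewrite xX.
Qed.

Lemma matching_nbh A B f : matching A B f -> matching A (nbh A B) f.
Proof.
case=> fE fI; split=> // x xA; have [y fx /andP[yB Exy]] := fE x xA.
by exists y; rewrite // !inE yB Exy andbT; apply/existsP; exists x; rewrite xA.
Qed.

Lemma matching_split A B X f1 f2 : X \subset A ->
  matching X B f1 -> matching (A :\: X) (B :\: nbh X B) f2 ->
  matching A B (fun x => if x \in X then f1 x else f2 x).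
Proof.
move=> XA m1 m2.
have eA : X :|: A :\: X = A by rewrite -{1}(setIidPr XA) setID.
have eB : nbh X B :|: B :\: nbh X B = B by rewrite -{1}(setIidPr (nbh_sub X B)) setID.
rewrite -eA -eB; apply: matching_glue (matching_nbh m1) m2 _.
by rewrite disjoints_subset setCD subsetUr.
Qed.

Lemma matching_add1 A B a b f : a \in A -> b \in B -> E a b ->
  matching (A :\ a) (B :\ b) f ->
  matching A B (fun x => if x \in [set a] then Some b else f x).
Proof.
move=> aA bB Eab m2; rewrite -(setD1K aA) -(setD1K bB).
apply: matching_glue m2 _; last by rewrite disjoints1 setD11.
by split=> [x /set1P ->|x x' /set1P -> /set1P ->] //; exists b; rewrite ?inE ?eqxx.
Qed.

(* Halmos-Vaughan: either some nonempty proper X is tight, and X and A :\: X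
   are matched separately, or every such X has a surplus, and any edge at a
   can be used first. *)
Theorem hall_marriage A B : hall_cond A B -> exists f, matching A B f.
Proof.
have [c] := ubnP #|A|; elim: c A B => // c IH A B /ltnSE Ac hAB.
case: (boolP [exists X : {set T},
                [&& X \subset A, X != set0, X != A & #|nbh X B| <= #|X|]]).
  case/existsP => X /and4P[XA X0 XA' tight].
  have XpA : X \proper A by rewrite properEneq XA' XA.
  have [f1 m1] := IH X B (leq_trans (proper_card XpA) Ac)
    (fun Y YX => hAB Y (subset_trans YX XA)).
  have AXc : #|A :\: X| < c.
    rewrite cardsD (setIidPr XA); apply: leq_trans Ac.
    by rewrite ltn_subrL card_gt0 X0 (leq_ltn_trans _ (proper_card XpA)).
  have [f2 m2] := IH _ _ AXc (hall_cond_tight hAB XA tight).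
  by exists (fun x => if x \in X then f1 x else f2 x); apply: matching_split.
move/existsPn=> no_tight.
have surplus X : X \subset A -> X != set0 -> X != A -> #|X| < #|nbh X B|.
  by move=> XA X0 XA'; move: (no_tight X); rewrite XA X0 XA' /= -ltnNge.
have [->|[a aA]] := set_0Vmem A; first by exists (fun=> None); split=> x; rewrite inE.
have [b] : exists b, b \in nbh [set a] B.
  by apply/card_gt0P; apply: leq_trans (hAB _ _); rewrite ?cards1 ?sub1set.
rewrite !inE => /andP[bB /existsP[_ /andP[/set1P -> Eab]]].
have [f m] := IH _ _ (leq_trans (proper_card (properD1 aA)) Ac)
  (hall_cond_surplus b surplus aA).
by exists (fun x => if x \in [set a] then Some b else f x); apply: matching_add1.
Qed.

Lemma matching_onto f :
  matching [set: T] [set: U] f -> #|U| <= #|T| -> forall y, exists x, f x = Some y.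
Proof.
case=> fE fI cardUT y; pose g x := odflt y (f x).
have gE x : f x = Some (g x) by rewrite /g; case: (fE x (in_setT x)) => y' ->.
have g_inj : injective g by move=> x x' e; apply: fI; rewrite ?in_setT // !gE e.
have /codomP[x ->] : y \in codom g := inj_card_onto g_inj cardUT y.
by exists x.
Qed.

End HallMarriage.

Lemma card_lower_homo (T : finType) (lt : rel T) : transitive lt -> irreflexive lt ->
  {homo (fun x => #|[set y | lt y x]|) : x y / lt x y >-> x < y}.
Proof.
move=> ltT ltI x y lxy; apply: proper_card; rewrite properE; apply/andP; split.
  by apply/subsetP => z; rewrite !inE => /ltT; apply.
by apply/subsetPn; exists x; rewrite !inE ?ltI.
Qed.

Section UnipotentRank.
Variable k : fieldType.
Local Open Scope ring_scope.

Lemma row_free_unipotent K (M : 'M[k]_K) (lt : rel 'I_K) :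
  transitive lt -> irreflexive lt -> (forall i j, M i j != 0 -> lt j i) ->
  row_free (1%:M - M).
Proof.
move=> ltT ltI Mlt; apply: inj_row_free => v; rewrite mulmxBr mulmx1 => /subr0_eq vM.
apply/rowP => j; rewrite mxE; apply/eqP/negPn/negP => vj.
pose rho j := #|[set i | lt i j]|.
case: (@arg_maxnP _ j (fun i => v 0 i != 0) rho vj) => j' vj' j'max.
move: vj'; rewrite {1}vM mxE big1 ?eqxx // => i _.
have [->|/Mlt lt_j'i] := eqVneq (M i j') 0; first by rewrite mulr0.
have [->|vi] := eqVneq (v 0 i) 0; first by rewrite mul0r.
by move: (j'max i vi) => /(leq_trans (card_lower_homo ltT ltI lt_j'i)); rewrite ltnn.
Qed.

Lemma hall_cond_mulmx1 m n (A : 'M[k]_(m, n)) (B : 'M[k]_(n, m))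
    (E : 'I_m -> 'I_n -> bool) (lt : rel 'I_m) :
  A *m B = 1%:M -> transitive lt -> irreflexive lt ->
  (forall p p' q, A p q != 0 -> B q p' != 0 -> ~~ E p q -> ~~ E p' q -> lt p' p) ->
  hall_cond E [set: 'I_m] [set: 'I_n].
Proof.
move=> AB ltT ltI key X _; set N := nbh E X setT.
pose eX := @enum_val _ (mem X); pose eN := @enum_val _ (mem N).
pose M : 'M[k]_#|X| := \matrix_(i, i') \sum_(q | q \notin N) A (eX i) q * B q (eX i').
have AB_XN : mxsub eX eN A *m mxsub eN eX B = 1%:M - M.
  apply/matrixP => i i'; rewrite !mxE.
  have := congr1 (fun C : 'M_m => C (eX i) (eX i')) AB.
  rewrite !mxE (inj_eq enum_val_inj) => <-.
  rewrite (bigID (mem N)) /= addrK [in RHS]big_enum_val /=.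
  by apply: eq_bigr => j _; rewrite !mxE.
have M_lt i i' : M i i' != 0 -> lt (eX i') (eX i).
  rewrite mxE; apply: contraNT => nlt; apply/eqP/big1 => q qN.
  have [->|Aq] := eqVneq (A (eX i) q) 0; first by rewrite mul0r.
  have [->|Bq] := eqVneq (B q (eX i')) 0; first by rewrite mulr0.
  by case/negP: nlt; apply: key Aq Bq _ _; apply: nbhN qN; rewrite ?enum_valP.
have /eqP <- := row_free_unipotent (lt := fun i' i => lt (eX i') (eX i))
  (fun _ _ _ => ltT _ _ _) (fun i => ltI (eX i)) M_lt.
by rewrite -AB_XN; apply: leq_trans (mxrankM_maxl _ _) (rank_leq_col _).
Qed.

End UnipotentRank.

Implicit Types (I J : pred bpt).

Lemma RlebP s t : reflect (Rle s t) (Rleb s t).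
Proof. by rewrite /Rleb; case: Rle_dec => h; constructor. Qed.

Lemma ble_lam eps b b' : ble b b' -> ble (lam eps b) (lam eps b').
Proof.
case: b b' => [|s i|] [|t j|] //= /andP[-> /RlebP st]; apply/RlebP; lra.
Qed.

Lemma inL_NegInf I : inL I -> I NegInf.
Proof. by case. Qed.

Lemma inL_down I x y : inL I -> ble x y -> I y -> I x.
Proof. by case=> [[_ conv _] IN _] xy Iy; apply: conv IN Iy _ xy. Qed.

Lemma inL_PosInfN I : inL I -> ~~ I PosInf.
Proof.
case=> [[_ conv _] IN [b /negP Ib]]; apply/negP => IP.
by apply: Ib (conv _ _ _ IN IP _ _); case: b.
Qed.

Definition shift_incl eps (I J : pred bpt) := forall b, I (lam eps b) -> J b.

Section IntervalModules.
Variable k : fieldType.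
Local Open Scope ring_scope.

Lemma ivmod_significant d I : I NegInf -> significant d (ivmod k I).
Proof.
move=> IN /(_ NegInf) /matrixP.
have i0 : 'I_(I NegInf) by apply: (@Ordinal _ 0); rewrite IN.
by move=> /(_ i0 i0) /eqP; rewrite !mxE oner_eq0.
Qed.

Lemma mul_const_mx1 (a b c : bool) : (a -> c -> b) ->
  (const_mx 1 : 'M[k]_(a, b)) *m (const_mx 1 : 'M[k]_(b, c)) = const_mx 1.
Proof.
move=> abc; apply/matrixP => i j; rewrite !mxE.
have -> : b = true by apply: abc; [case: a i => -[] | case: c j => -[]].
by rewrite big_ord1 !mxE mulr1.
Qed.

Lemma ivmod_const_morph eps I J : inL J -> shift_incl eps J I ->
  is_morph (V := ivmod k I) (W := shift eps (ivmod k J)) (fun=> const_mx 1).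
Proof.
move=> JL JI b b' bb' /=; rewrite !mul_const_mx1 // => _ Jb'.
  exact: inL_down JL (ble_lam eps bb') Jb'.
exact: JI.
Qed.

Lemma ivmod_interleaved eps I J : inL I -> inL J ->
  shift_incl eps I J -> shift_incl eps J I -> interleaved eps (ivmod k I) (ivmod k J).
Proof.
move=> IL JL IJ JI; exists (fun=> const_mx 1), (fun=> const_mx 1); split.
- exact: ivmod_const_morph.
- exact: ivmod_const_morph.
- by move=> b /=; rewrite mul_const_mx1 // => _; apply: IJ.
- by move=> b /=; rewrite mul_const_mx1 // => _; apply: JI.
Qed.

End IntervalModules.

Section DirectSums.
Variable k : fieldType.
Local Open Scope ring_scope.

Lemma dsum_idx_mem m (X : 'I_m -> pred bpt) b (p : 'I_m) : (val p \in dsum_idx X b) = X p b.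
Proof. by rewrite /dsum_idx (mem_map val_inj) mem_filter mem_enum andbT. Qed.

Lemma dsum_idx_NegInf m (X : 'I_m -> pred bpt) :
  (forall p, X p NegInf) -> dsum_idx X NegInf = iota 0 m.
Proof.
by move=> XN; rewrite /dsum_idx (eq_filter (a2 := predT)) ?filter_predT ?val_enum_ord.
Qed.

Lemma nth_dsum_idx_NegInf m (X : 'I_m -> pred bpt) i : (forall p, X p NegInf) ->
  (i < size (dsum_idx X NegInf))%N -> nth 0%N (dsum_idx X NegInf) i = i.
Proof. by move=> XN; rewrite dsum_idx_NegInf // size_iota => /nth_iota->. Qed.

Lemma bmap_dsum_NegInf m (X : 'I_m -> pred bpt) :
  (forall p, X p NegInf) -> bmap (dsum k X) NegInf NegInf = 1%:M.
Proof.
move=> XN; apply/matrixP => a c; rewrite !mxE /=.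
by rewrite !(nth_dsum_idx_NegInf XN (ltn_ord _)) (inj_eq val_inj).
Qed.

Lemma dsum_morph_NegInf_incl m n (X : 'I_m -> pred bpt) (Y : 'I_n -> pred bpt) eps
    (alpha : forall b, 'M[k]_(bdim (dsum k X) b, bdim (dsum k Y) (lam eps b))) :
  (forall p, X p NegInf) -> (forall q, Y q NegInf) ->
  is_morph (V := dsum k X) (W := shift eps (dsum k Y)) alpha ->
  forall a c (p : 'I_m) (q : 'I_n), val a = val p -> val c = val q ->
  alpha NegInf a c != 0 -> shift_incl eps (Y q) (X p).
Proof.
move=> XN YN alpha_morph a c p q ap cq alpha_ac b Yq; apply/idPn => Xp.
have q_lt : (index (val q) (dsum_idx Y (lam eps b)) < bdim (dsum k Y) (lam eps b))%N.
  by rewrite index_mem dsum_idx_mem.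
move/matrixP/(_ a (Ordinal q_lt)): (alpha_morph NegInf b isT); rewrite !mxE /=.
rewrite big1 => [|r _]; last first.
  rewrite !mxE (nth_dsum_idx_NegInf XN (ltn_ord _)) ap.
  case: eqP => [pr|_]; last by rewrite mul0r.
  by case/negP: Xp; rewrite -dsum_idx_mem pr mem_nth.
rewrite (bigD1 c) //= big1 => [|s sc]; last first.
  rewrite !mxE (nth_dsum_idx_NegInf YN (ltn_ord _)) nth_index ?dsum_idx_mem // -cq.
  by rewrite (inj_eq val_inj) (negbTE sc) mulr0.
rewrite !mxE (nth_dsum_idx_NegInf YN (ltn_ord _)) nth_index ?dsum_idx_mem // cq eqxx.
by rewrite mulr1 addr0 => /esym/eqP; rewrite (negbTE alpha_ac).
Qed.

Lemma interleaved_dsum_NegInf m n (X : 'I_m -> pred bpt) (Y : 'I_n -> pred bpt) eps :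
  (forall p, X p NegInf) -> (forall q, Y q NegInf) ->
  interleaved eps (dsum k X) (dsum k Y) ->
  exists (A : 'M[k]_(m, n)) (B : 'M[k]_(n, m)),
    [/\ A *m B = 1%:M,
        forall p q, A p q != 0 -> shift_incl eps (Y q) (X p) &
        forall q p, B q p != 0 -> shift_incl eps (X p) (Y q)].
Proof.
move=> XN YN [alpha [beta [alpha_morph beta_morph alpha_beta _]]].
have dimX : bdim (dsum k X) NegInf = m by rewrite /= dsum_idx_NegInf ?size_iota.
have dimY : bdim (dsum k Y) NegInf = n by rewrite /= dsum_idx_NegInf ?size_iota.
have AB : alpha NegInf *m beta NegInf = 1%:M :=
  etrans (alpha_beta NegInf) (bmap_dsum_NegInf XN).
have incl_A := dsum_morph_NegInf_incl XN YN alpha_morph.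
have incl_B := dsum_morph_NegInf_incl YN XN beta_morph.
(* The dimensions at -oo equal m and n only propositionally: generalize, then rewrite. *)
move: (alpha NegInf) (beta NegInf) AB incl_A incl_B; rewrite dimX dimY.
move=> A B AB incl_A incl_B; exists A, B; split=> // [p q | q p].
  exact: incl_A.
exact: incl_B.
Qed.

End DirectSums.

Section LanePotential.
Local Open Scope R_scope.

Definition lex_lt (x y : R * R * R) :=
  x.1.1 < y.1.1 \/ (x.1.1 = y.1.1 /\ (x.1.2 < y.1.2 \/ (x.1.2 = y.1.2 /\ x.2 < y.2))).

Definition lex_le (x y : R * R * R) :=
  lex_lt x y \/ (x.1.1 = y.1.1 /\ x.1.2 = y.1.2 /\ x.2 = y.2).

Lemma lex_lt_trans x y z : lex_lt x y -> lex_lt y z -> lex_lt x z.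
Proof. rewrite /lex_lt; lra. Qed.

Lemma lex_lt_irrefl x : ~ lex_lt x x.
Proof. rewrite /lex_lt; lra. Qed.

Definition add3 (x y : R * R * R) := (x.1.1 + y.1.1, x.1.2 + y.1.2, x.2 + y.2).

Definition shift_mid e (x : R * R * R) := (x.1.1, x.1.2 + e, x.2).

Definition down_closed (D : R -> bool) := forall s t, s <= t -> D t -> D s.

Definition sup_of (D : R -> bool) : R :=
  match pselect (bound D /\ exists t, D t) with
  | left h => proj1_sig (completeness _ (proj1 h) (proj2 h))
  | right _ => 0
  end.

Lemma sup_ofP (D : R -> bool) : bound D -> (exists t, D t) -> is_lub D (sup_of D).
Proof.
by rewrite /sup_of; case: pselect => [h _ _|nh Db Dne]; [exact: proj2_sig | case: nh].
Qed.

(* A down-closed subset of R is all of R, empty, or a cut (-oo, d) or (-oo, d];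
   these are encoded so that inclusion becomes the lexicographic order. *)
Definition lane_pot (D : R -> bool) : R * R * R :=
  if pselect (forall t, D t) then (1, 0, 0)
  else if pselect (exists t, D t) then (0, sup_of D, if D (sup_of D) then 1 else 0)
  else (-1, 0, 0).

Variant lane_pot_spec (D : R -> bool) : R * R * R -> Prop :=
  | LanePotFull of (forall t, D t) : lane_pot_spec D (1, 0, 0)
  | LanePotEmpty of (forall t, ~~ D t) : lane_pot_spec D (-1, 0, 0)
  | LanePotCut d of (forall t, D t -> t <= d) & (forall t, t < d -> D t) :
      lane_pot_spec D (0, d, if D d then 1 else 0).

Lemma lane_potP (D : R -> bool) : down_closed D -> lane_pot_spec D (lane_pot D).
Proof.
move=> Ddown; rewrite /lane_pot; case: pselect => [|Dfull]; first exact: LanePotFull.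
have [u /negP Du] : exists u, ~ D u by apply/existsNP.
case: pselect => [Dne|Dempty]; last first.
  by apply: LanePotEmpty => t; apply/negP => Dt; apply: Dempty; exists t.
have Dbound : bound D.
  by exists u => t Dt; apply: Rnot_lt_le => ut; case/negP: Du; apply: Ddown Dt; lra.
have [Dub Dlub] := sup_ofP Dbound Dne.
apply: LanePotCut => [t|t t_lt]; first exact: Dub.
apply/idPn => Dt; have : sup_of D <= t; last lra.
by apply: Dlub => s Ds; apply: Rnot_lt_le => ts; case/negP: Dt; apply: Ddown Ds; lra.
Qed.

Lemma lane_pot_le_shift e (D E : R -> bool) : 0 <= e -> down_closed D -> down_closed E ->
  (forall t, E (t + e) -> D t) -> lex_le (lane_pot E) (shift_mid e (lane_pot D)).
Proof.
move=> e0 Ddown Edown ED.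
case: (lane_potP Ddown) => [Dfull|Dempty|d Dle Dlt];
  case: (lane_potP Edown) => [Efull|Eempty|c Ele Elt]; rewrite /lex_le /lex_lt /=.
- lra.
- lra.
- lra.
- by case/negP: (Dempty 0); apply/ED/Efull.
- lra.
- by case/negP: (Dempty (c - 1 - e)); apply/ED/Elt; lra.
- by have := Dle _ (ED (d + 1) (Efull _)); lra.
- lra.
have cde : c <= d + e.
  apply: Rnot_lt_le => dec.
  by have := Dle _ (ED _ (Elt ((d + c - e) / 2 + e) _)); lra.
have [c_lt|->] : c < d + e \/ c = d + e by lra.
  lra.
by case: (boolP (E (d + e))) => [/ED ->|_]; case: (D d); lra.
Qed.

Lemma lane_pot_lt_shift e (D E : R -> bool) : down_closed D -> down_closed E ->
  (exists t, D (t + e) /\ ~~ E t) -> lex_lt (shift_mid e (lane_pot E)) (lane_pot D).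
Proof.
move=> Ddown Edown [t [Dte Et]].
case: (lane_potP Ddown) => [Dfull|Dempty|d Dle Dlt];
  case: (lane_potP Edown) => [Efull|Eempty|c Ele Elt]; rewrite /lex_lt /=;
  rewrite ?Efull ?(negbTE (Dempty _)) // in Et Dte.
- lra.
- lra.
- lra.
have ct : c <= t by apply: Rnot_lt_le => /Elt; apply/negP.
have tde := Dle _ Dte; have [c_lt|ce] : c + e < d \/ c + e = d by lra.
  lra.
have -> : d = t + e by lra.
have -> : c = t by lra.
by rewrite Dte (negbTE Et); lra.
Qed.

End LanePotential.

Definition lane_set (I : pred bpt) l : R -> bool := fun t => I (Pt t l).

Definition interval_pot (I : pred bpt) :=
  add3 (lane_pot (lane_set I One)) (lane_pot (lane_set I Two)).

Lemma lane_set_down I l : inL I -> down_closed (lane_set I l).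
Proof.
by move=> IL s t st; apply: inL_down IL _; case: l => /=; apply/RlebP.
Qed.

Lemma not_shift_incl_lane eps I J : inL I -> inL J -> ~ shift_incl eps I J ->
  exists l t, lane_set I l (t + eps) /\ ~~ lane_set J l t.
Proof.
move=> IL JL /existsNP[[|t l|] /not_implyP[Ib /negP Jb]].
- by case/negP: Jb; apply: inL_NegInf.
- by exists l, t.
- by case/negP: (inL_PosInfN IL).
Qed.

Lemma interval_pot_lt eps I J : Rle 0 eps -> inL I -> inL J ->
  shift_incl eps I J -> ~ shift_incl eps J I -> lex_lt (interval_pot I) (interval_pot J).
Proof.
move=> eps0 IL JL IJ nJI.
have Idown l := @lane_set_down I l IL; have Jdown l := @lane_set_down J l JL.
have le_lane l := lane_pot_le_shift eps0 (Jdown l) (Idown l) (fun t => IJ (Pt t l)).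
have [l [t lt_t]] := not_shift_incl_lane JL IL nJI.
have := lane_pot_lt_shift (Jdown l) (Idown l) (ex_intro _ t lt_t).
(* On lane l, I + eps < J; on every lane, I <= J + eps: the eps cancel in the sum. *)
move: (le_lane One) (le_lane Two); rewrite /interval_pot /lex_le /lex_lt.
by clear lt_t; case: l => /=; lra.
Qed.

Section BipathHall.
Variable k : fieldType.

Lemma interleaved_sym eps (V W : bmod k) : interleaved eps V W -> interleaved eps W V.
Proof. by case=> alpha [beta [? ? ? ?]]; exists beta, alpha. Qed.

Lemma hall_cond_dsum_interleaved eps m n (X : 'I_m -> pred bpt) (Y : 'I_n -> pred bpt)
    (E : 'I_m -> 'I_n -> bool) :
  Rle 0 eps -> (forall p, inL (X p)) -> (forall q, inL (Y q)) ->
  (forall p q, shift_incl eps (Y q) (X p) -> shift_incl eps (X p) (Y q) -> E p q) ->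
  interleaved eps (dsum k X) (dsum k Y) -> hall_cond E [set: 'I_m] [set: 'I_n].
Proof.
move=> eps0 XL YL E_incl XY.
have [A [B [AB A_incl B_incl]]] :=
  interleaved_dsum_NegInf (fun p => inL_NegInf (XL p)) (fun q => inL_NegInf (YL q)) XY.
pose lt p' p := `[< lex_lt (interval_pot (X p')) (interval_pot (X p)) >].
apply: (hall_cond_mulmx1 (lt := lt) AB).
- by move=> p' p p'' /asboolP lt1 /asboolP lt2; apply/asboolP; apply: lex_lt_trans lt1 lt2.
- by move=> p; apply/negbTE/asboolPn/lex_lt_irrefl.
move=> p p' q Apq Bqp' nEpq nEp'q; apply/asboolP.
apply: (@lex_lt_trans _ (interval_pot (Y q))).
  apply: (interval_pot_lt eps0 (XL _) (YL _) (B_incl _ _ Bqp')) => YX.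
  by case/negP: nEp'q; apply: E_incl YX (B_incl _ _ Bqp').
apply: (interval_pot_lt eps0 (YL _) (XL _) (A_incl _ _ Apq)) => XY'.
by case/negP: nEpq; apply: E_incl (A_incl _ _ Apq) XY'.
Qed.

Lemma hall_of_hall_cond m n (P : 'I_m -> Prop) (E : 'I_m -> 'I_n -> Prop) :
  hall_cond (fun p q => `[< E p q >]) [set: 'I_m] [set: 'I_n] -> hall P E.
Proof.
move=> hE X _; exists (nbh (fun p q => `[< E p q >]) X setT); split; last exact: hE.
move=> q; rewrite !inE /=; split=> [/existsP[p /andP[pX /asboolP]]|[p pX /asboolP Epq]].
  by exists p.
by apply/existsP; exists p; rewrite pX.
Qed.

Lemma bottleneck_of_hall_cond eps m n (X : 'I_m -> pred bpt) (Y : 'I_n -> pred bpt) :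
  hall_cond (fun p q => `[< interleaved eps (ivmod k (X p)) (ivmod k (Y q)) >])
    [set: 'I_m] [set: 'I_n] ->
  hall_cond (fun q p => `[< interleaved eps (ivmod k (X p)) (ivmod k (Y q)) >])
    [set: 'I_n] [set: 'I_m] ->
  bottleneck k eps X Y.
Proof.
move=> hallX hallY; have [f [fE fI]] := hall_marriage hallX.
have card_nm : #|'I_n| <= #|'I_m|.
  by rewrite -cardsT; apply: leq_trans (hallY _ (subxx _)) (max_card _).
have onto := matching_onto (conj fE fI) card_nm.
exists f; split.
- by move=> p p' q fp fp'; apply: fI; rewrite ?inE // fp fp'.
- move=> p q fp; have [q' fq /andP[_ /asboolP]] := fE p (in_setT p).
  by rewrite fp in fq; case: fq => ->.
- by move=> p fp; have [q'] := fE p (in_setT p); rewrite fp.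
- by move=> q nq; have [p /nq] := onto q.
Qed.

End BipathHall.

Theorem proposition4p15 (k : fieldType) (V W : bmod k) (eps : R) :
  is_bmod V -> is_bmod W -> Rle 0 eps ->
  forall (IV : Type) (JV : IV -> pred bpt) (IW : Type) (JW : IW -> pred bpt),
  is_barcode V JV -> is_barcode W JW ->
  forall (m : nat) (fV : 'I_m -> IV), enumL JV fV ->
  forall (n : nat) (fW : 'I_n -> IW), enumL JW fW ->
  let XV := fun p => JV (fV p) in
  let XW := fun q => JW (fW q) in
  let VL := dsum k XV in
  let WL := dsum k XW in
  let G := fun p q => interleaved eps (ivmod k (XV p)) (ivmod k (XW q)) in
  (* (1) B_{2eps}(V^L) = B(V^L), B_{2eps}(W^L) = B(W^L) *)
  ((forall p, significant (Rplus eps eps) (ivmod k (XV p))) /\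
   (forall q, significant (Rplus eps eps) (ivmod k (XW q)))) /\
  (* (2) Hall conditions (H) and (H') *)
  (interleaved eps VL WL ->
     hall (fun p => significant (Rplus eps eps) (ivmod k (XV p))) G /\
     hall (fun q => significant (Rplus eps eps) (ivmod k (XW q))) (fun q p => G p q)) /\
  (* consequence: a bottleneck Lambda_eps-interleaving exists *)
  (interleaved eps VL WL -> bottleneck k eps XV XW).
Proof.
move=> _ _ eps0 IV JV IW JW _ _ m fV [_ XVL _] n fW [_ XWL _] XV XW VL WL G.
have hallV : interleaved eps VL WL -> hall_cond (fun p q => `[< G p q >]) setT setT.
  apply: (hall_cond_dsum_interleaved eps0 XVL XWL) => p q XWV XVW.
  by apply/asboolP; exact: ivmod_interleaved (XVL p) (XWL q) XVW XWV.
have hallW : interleaved eps VL WL -> hall_cond (fun q p => `[< G p q >]) setT setT.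
  move=> /interleaved_sym; apply: (hall_cond_dsum_interleaved eps0 XWL XVL) => q p XVW XWV.
  by apply/asboolP; exact: ivmod_interleaved (XVL p) (XWL q) XVW XWV.
split.
  by split=> [p|q]; apply/ivmod_significant/inL_NegInf; [exact: XVL | exact: XWL].
split; first by move=> VW; split; apply: hall_of_hall_cond; [exact: hallV | exact: hallW].
by move=> VW; apply: bottleneck_of_hall_cond; [exact: hallV | exact: hallW].
Qed.
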